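(* Any rule defined on $\mathcal{E}_{\mathcal{SP}}$ that satisfies own-peak-onliness, peak responsiveness, and not obvious manipulability (NOM) meets the equal division guarantee.
   Context: Let $N=\{1,\dots,n\}$ be a finite set of agents. A preference $R_i$ is a continuous complete preorder on $\mathbb{R}_+\cup\{\infty\}$ ($P_i$ strict, $I_i$ indifference); its peak $p(R_i)$ is the set of maximal elements. $R_i$ is single-peaked if $p(R_i)$ is a singleton (identified with its element, possibly $\infty$) and for $x,x'\in\mathbb{R}_+$, $xP_ix'$ whenever $x'<x\le p(R_i)$ or $p(R_i)\le x<x'$; $\mathcal{SP}$ is the set of these. An economy is $(R,\Omega)$, $R\in\mathcal{SP}^n$, $\Omega>0$; $\mathcal{E}_{\mathcal{SP}}$ is the set of economies; a rule is a map $\varphi:\mathcal{E}_{\mathcal{SP}}\to\mathbb{R}^n_+$ with $\sum_j\varphi_j(R,\Omega)=\Omega$. Own-peak-onliness: $p(R_i')=p(R_i)$ implies $\varphi_i(R,\Omega)=\varphi_i(R_i',R_{-i},\Omega)$. Peak responsiveness: for $i\ne j$, $p(R_i)\le p(R_j)$ implies $\varphi_i(R,\Omega)\le\varphi_j(R,\Omega)$. Equal division guarantee: $p(R_i)=\Omega/n$ implies $\varphi_i(R,\Omega)I_i\Omega/n$. Option set $O^\varphi(R_i,\Omega)=\{\varphi_i(R_i,R_{-i},\Omega):R_{-i}\in\mathcal{SP}^{n-1}\}$; $R_i'$ is a manipulation at $(R_i,\Omega)$ if $\varphi_i(R_i',R_{-i},\Omega)P_i\varphi_i(R_i,R_{-i},\Omega)$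 for some $R_{-i}$, and an obvious manipulation if moreover each $x'\in O^\varphi(R_i',\Omega)$ satisfies $x'P_ix$ for some $x\in O^\varphi(R_i,\Omega)$; NOM means no obvious manipulation exists. *)

From HB Require Import structures.
From mathcomp Require Import all_boot all_order all_algebra.
From mathcomp Require Import all_classical all_reals all_analysis.
Set Implicit Arguments. Unset Strict Implicit. Unset Printing Implicit Defensive.
Import Order.TTheory GRing.Theory Num.Theory.
Local Open Scope classical_set_scope.
Local Open Scope ring_scope.

Section Defs.
Variable R : realType.

Definition cdom (x : \bar R) : Prop := (0 <= x)%E.

(* A (weak) preference relation: x R y means "x is at least as good as y". *)
Definition prel := \bar R -> \bar R -> Prop.

(* Continuous complete preorder on R_+ \cup {oo}.  Since cdom is closed in
   \bar R, relatively closed subsets of cdom are exactly the closed subsets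
   of \bar R contained in cdom. *)
Definition is_preference (Rel : prel) : Prop :=
  [/\ (forall x, cdom x -> Rel x x),
      (forall x y, cdom x -> cdom y -> Rel x y \/ Rel y x),
      (forall x y z, cdom x -> cdom y -> cdom z -> Rel x y -> Rel y z -> Rel x z),
      (forall y, cdom y -> closed [set x | cdom x /\ Rel x y]) &
      (forall y, cdom y -> closed [set x | cdom x /\ Rel y x])].

Definition strict (Rel : prel) x y : Prop := Rel x y /\ ~ Rel y x.
Definition indiff (Rel : prel) x y : Prop := Rel x y /\ Rel y x.

Definition peak (Rel : prel) : set (\bar R) :=
  [set x | cdom x /\ forall y, cdom y -> Rel x y].

Definition single_peaked (Rel : prel) : Prop :=
  is_preference Rel /\
  exists p : \bar R, peak Rel = [set p] /\
    forall x x' : R, 0 <= x' ->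
      ((x' < x /\ (x%:E <= p)%E) \/ ((p <= x%:E)%E /\ x < x')) ->
      strict Rel x%:E x'%:E.

Variable n : nat.

(* Preference profiles and rules (rules are arbitrary maps; only their values
   on economies in E_SP matter). *)
Definition profile := 'I_n -> prel.
Definition SPprofile (Rp : profile) : Prop := forall j, single_peaked (Rp j).

Definition upd (Rp : profile) (i : 'I_n) (Ri : prel) : profile :=
  fun j => if j == i then Ri else Rp j.

Definition is_rule (phi : profile -> R -> 'I_n -> R) : Prop :=
  forall Rp Om, SPprofile Rp -> 0 < Om ->
    (forall j, 0 <= phi Rp Om j) /\ \sum_(j < n) phi Rp Om j = Om.

Definition own_peak_only (phi : profile -> R -> 'I_n -> R) : Prop :=
  forall Rp Om i Ri', SPprofile Rp -> 0 < Om -> single_peaked Ri' ->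
    peak Ri' = peak (Rp i) -> phi Rp Om i = phi (upd Rp i Ri') Om i.

Definition peak_responsive (phi : profile -> R -> 'I_n -> R) : Prop :=
  forall Rp Om i j, SPprofile Rp -> 0 < Om -> i != j ->
    (forall a b, peak (Rp i) a -> peak (Rp j) b -> (a <= b)%E) ->
    phi Rp Om i <= phi Rp Om j.

Definition equal_division_guarantee (phi : profile -> R -> 'I_n -> R) : Prop :=
  forall Rp Om i, SPprofile Rp -> 0 < Om ->
    peak (Rp i) = [set (Om / n%:R)%:E] ->
    indiff (Rp i) (phi Rp Om i)%:E (Om / n%:R)%:E.

(* Option set O^phi(R_i, Om): R_{-i} ranges over single-peaked preferences of
   the agents j != i (coordinate i of Rp is overwritten by Ri). *)
Definition option_set (phi : profile -> R -> 'I_n -> R) (i : 'I_n) (Ri : prel)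
    (Om : R) : set R :=
  [set x | exists Rp : profile, (forall j, j != i -> single_peaked (Rp j)) /\
           x = phi (upd Rp i Ri) Om i].

Definition manipulation (phi : profile -> R -> 'I_n -> R) (i : 'I_n)
    (Ri Ri' : prel) (Om : R) : Prop :=
  exists Rp : profile, (forall j, j != i -> single_peaked (Rp j)) /\
    strict Ri (phi (upd Rp i Ri') Om i)%:E (phi (upd Rp i Ri) Om i)%:E.

Definition obvious_manipulation (phi : profile -> R -> 'I_n -> R) (i : 'I_n)
    (Ri Ri' : prel) (Om : R) : Prop :=
  manipulation phi i Ri Ri' Om /\
  forall x', option_set phi i Ri' Om x' ->
    exists2 x, option_set phi i Ri Om x & strict Ri x'%:E x%:E.

Definition NOM (phi : profile -> R -> 'I_n -> R) : Prop :=
  forall i Ri Ri' Om, single_peaked Ri -> single_peaked Ri' -> 0 < Om ->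
    ~ obvious_manipulation phi i Ri Ri' Om.

End Defs.

(* Let agent i have peak p = Om/n and receive x0 <> p.  By own-peak-onliness,
   x0 is also what i receives, against the same reports of the others, under
   every single-peaked preference with peak p.  If x0 < p, reporting the peak
   +oo makes i's share the largest one by peak responsiveness, so every
   outcome of that report lies in [p, Om]; a "tent" preference with peak p
   that is steep enough below p ranks all of [p, Om] strictly above x0, and
   the report is an obvious manipulation.  If x0 > p, reporting the peak 0
   confines the outcomes to [0, p] and the mirror construction applies. *)

From mathcomp Require Import all_boot all_order all_algebra.
From mathcomp Require Import all_classical all_reals all_analysis.
From mathcomp Require Import lra.
Set Implicit Arguments. Unset Strict Implicit. Unset Printing Implicit Defensive.
Import Order.TTheory GRing.Theory Num.Theory.
Local Open Scope classical_set_scope.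
Local Open Scope ring_scope.

Section ClosedSets.
Variable R : realType.

Lemma closed_cdom_itv (lo hi : \bar R) : closed [set x | cdom x /\ (lo <= x <= hi)%E].
Proof.
have -> : [set x | cdom x /\ (lo <= x <= hi)%E] =
    [set x | (0 <= x)%E] `&` [set x | (lo <= x)%E] `&` [set x | (x <= hi)%E].
  apply/seteqP; split=> x /=; first by case=> ? /andP[].
  by case=> -[? ?] ?; split=> //; apply/andP.
apply: closedI; first apply: closedI.
- exact: closed_ereal_le_ereal.
- exact: closed_ereal_le_ereal.
- exact: closed_ereal_ge_ereal.
Qed.

Lemma closed_cdom_out (lo hi : \bar R) :
  closed [set x | cdom x /\ ((x <= lo) || (hi <= x))%E].
Proof.
have -> : [set x | cdom x /\ ((x <= lo) || (hi <= x))%E] =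
    [set x | (0 <= x)%E] `&` ([set x | (x <= lo)%E] `|` [set x | (hi <= x)%E]).
  by apply/seteqP; split=> x /= [? /orP].
apply: closedI; first exact: closed_ereal_le_ereal.
by apply: closedU; [exact: closed_ereal_ge_ereal | exact: closed_ereal_le_ereal].
Qed.
End ClosedSets.

Section Tent.
Variables (R : realType) (a b p : R).

Definition tent_lossr (s : R) : R := Num.max (a * (p - s)) (b * (s - p)).

Definition tent_loss (x : \bar R) : \bar R :=
  if x is r%:E then (tent_lossr r)%:E else +oo%E.

Definition tent : prel R := fun x y => (tent_loss x <= tent_loss y)%E.

Lemma tent_lossr_left s : 0 < a -> 0 < b -> s <= p -> tent_lossr s = a * (p - s).
Proof. by move=> *; apply/max_idPl; nra. Qed.

Lemma tent_lossr_right s : 0 < a -> 0 < b -> p <= s -> tent_lossr s = b * (s - p).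
Proof. by move=> *; apply/max_idPr; nra. Qed.

Lemma tent_lossr_peak : tent_lossr p = 0.
Proof. by rewrite /tent_lossr subrr !mulr0 maxxx. Qed.

Lemma tent_lossr_ge0 s : 0 < a -> 0 < b -> 0 <= tent_lossr s.
Proof.
move=> a_gt0 b_gt0; have [sp|ps] := leP s p.
  by rewrite tent_lossr_left //; nra.
by rewrite tent_lossr_right ?(ltW ps) //; nra.
Qed.

Lemma tent_lossr_le s d : 0 < a -> 0 < b ->
  (tent_lossr s <= d) = (p - d / a <= s <= p + d / b).
Proof.
move=> a_gt0 b_gt0.
rewrite ge_max -!ler_pdivlMl // !(mulrC _^-1).
by congr andb; apply/idP/idP; lra.
Qed.

Lemma tent_lossr_ge s d : 0 < a -> 0 < b ->
  (d <= tent_lossr s) = (s <= p - d / a) || (p + d / b <= s).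
Proof.
move=> a_gt0 b_gt0; rewrite le_max -!ler_pdivrMl // !(mulrC _^-1).
by congr orb; apply/idP/idP; lra.
Qed.

Lemma tent_loss_le x d : 0 < a -> 0 < b ->
  (tent_loss x <= d%:E)%E = ((p - d / a)%:E <= x <= (p + d / b)%:E)%E.
Proof.
move=> a_gt0 b_gt0; case: x => [s| |] /=; last by [].
  by rewrite !lee_fin tent_lossr_le.
by rewrite andbF.
Qed.

Lemma tent_loss_ge x d : 0 < a -> 0 < b ->
  (d%:E <= tent_loss x)%E = (x <= (p - d / a)%:E)%E || ((p + d / b)%:E <= x)%E.
Proof.
move=> a_gt0 b_gt0; case: x => [s| |] /=.
- by rewrite !lee_fin tent_lossr_ge.
- by rewrite !leey.
- by rewrite leey leNye.
Qed.

Lemma tent_is_preference : 0 < a -> 0 < b -> is_preference tent.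
Proof.
move=> a_gt0 b_gt0; split.
- by move=> x _; rewrite /tent.
- by move=> x y _ _; apply/orP; exact: le_total.
- by move=> x y z _ _ _; exact: le_trans.
- move=> [r| |] // _; rewrite /tent /=.
    under eq_fun do rewrite tent_loss_le //.
    exact: closed_cdom_itv.
  have -> : [set x | cdom x /\ (tent_loss x <= +oo)%E] = [set x | (0 <= x)%E].
    by apply/seteqP; split=> x /=; rewrite leey; [case|].
  exact: closed_ereal_le_ereal.
- move=> [r| |] // _; rewrite /tent /=.
    under eq_fun do rewrite tent_loss_ge //.
    exact: closed_cdom_out.
  have -> : [set x | cdom x /\ (+oo <= tent_loss x)%E] =
      [set x | cdom x /\ (+oo <= x <= +oo)%E].
    by apply/seteqP; split=> -[r| |] /= -[].
  exact: closed_cdom_itv.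
Qed.

Lemma lt_tent_strict x y : tent_lossr x < tent_lossr y -> strict tent x%:E y%:E.
Proof. by move=> lt_xy; rewrite /strict /tent /= !lee_fin (ltW lt_xy) leNgt lt_xy. Qed.

Lemma tent_peak : 0 < a -> 0 < b -> 0 <= p -> peak tent = [set p%:E].
Proof.
move=> a_gt0 b_gt0 p_ge0; apply/seteqP; split=> [x [x_ge0]|_ ->] /=.
  move=> /(_ p%:E); rewrite /cdom lee_fin /tent /= tent_lossr_peak => /(_ p_ge0).
  case: x x_ge0 => [s _| |] //=.
  by rewrite lee_fin tent_lossr_le // !mul0r subr0 addr0 -eq_le => /eqP <-.
split=> [|y _]; first by rewrite /cdom lee_fin.
rewrite /tent /= tent_lossr_peak.
by case: y => [s| |] //=; rewrite ?lee_fin ?tent_lossr_ge0 ?leey.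
Qed.

Lemma tent_single_peaked : 0 < a -> 0 < b -> 0 <= p -> single_peaked tent.
Proof.
move=> a_gt0 b_gt0 p_ge0; split; first exact: tent_is_preference.
exists p%:E; split; first exact: tent_peak.
move=> x x' _ [[lt_x'x le_xp]|[le_px lt_xx']]; apply: lt_tent_strict.
  by rewrite lee_fin in le_xp; rewrite !tent_lossr_left //; [nra | lra].
by rewrite lee_fin in le_px; rewrite !tent_lossr_right //; [nra | lra].
Qed.
End Tent.

Lemma exists_sp_pref_disliking_below_peak (R : realType) (p x0 M : R) :
  0 <= p -> x0 < p <= M ->
  exists T : prel R, [/\ single_peaked T, peak T = [set p%:E] &
    forall y, p <= y <= M -> strict T y%:E x0%:E].
Proof.
move=> p_ge0 /andP[x0_lt_p p_le_M].
(* The left slope makes the loss of x0 equal to M - x0 > M - p. *)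
have a_gt0 : 0 < (M - x0) / (p - x0) by rewrite divr_gt0 // subr_gt0 //; lra.
exists (tent ((M - x0) / (p - x0)) 1 p); split.
- exact: tent_single_peaked.
- exact: tent_peak.
move=> y /andP[p_le_y y_le_M]; apply: lt_tent_strict.
rewrite tent_lossr_right // tent_lossr_left ?(ltW x0_lt_p) // divfK; first lra.
by rewrite subr_eq0 gt_eqF.
Qed.

Lemma exists_sp_pref_disliking_above_peak (R : realType) (p x0 : R) :
  0 <= p < x0 ->
  exists T : prel R, [/\ single_peaked T, peak T = [set p%:E] &
    forall y, 0 <= y <= p -> strict T y%:E x0%:E].
Proof.
move=> /andP[p_ge0 p_lt_x0].
(* The right slope makes the loss of x0 equal to x0 > p. *)
have b_gt0 : 0 < x0 / (x0 - p) by rewrite divr_gt0 // ?subr_gt0 //; lra.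
exists (tent 1 (x0 / (x0 - p)) p); split.
- exact: tent_single_peaked.
- exact: tent_peak.
move=> y /andP[y_ge0 y_le_p]; apply: lt_tent_strict.
rewrite tent_lossr_left // tent_lossr_right ?(ltW p_lt_x0) // divfK; first lra.
by rewrite subr_eq0 gt_eqF.
Qed.

Section MoreIsBetter.
Variable R : realType.

Definition more_is_better : prel R := fun x y => (y <= x)%E.

Lemma more_is_better_peak : peak more_is_better = [set +oo%E].
Proof.
apply/seteqP; split=> [x [_ /(_ +oo%E le0y)]|_ ->] /=.
  by rewrite /more_is_better leye_eq => /eqP.
by split=> [|y _]; [exact: le0y | exact: leey].
Qed.

Lemma more_is_better_single_peaked : single_peaked more_is_better.
Proof.
split.
  split=> [x _|x y _ _|x y z _ _ _ le_yx le_zy|y _|y _]; rewrite /more_is_better //.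
  - by apply/orP; exact: le_total.
  - exact: le_trans le_zy le_yx.
  - by apply: closedI; [exact: closed_ereal_le_ereal | exact: closed_ereal_le_ereal].
  - by apply: closedI; [exact: closed_ereal_le_ereal | exact: closed_ereal_ge_ereal].
exists +oo%E; split; first exact: more_is_better_peak.
move=> x x' _ [[lt_x'x _]|[//]].
by rewrite /strict /more_is_better !lee_fin (ltW lt_x'x) leNgt lt_x'x.
Qed.
End MoreIsBetter.
Arguments more_is_better {R}.

Lemma upd_SPprofile (R : realType) n (Q : profile R n) i (Ri : prel R) :
  (forall j, j != i -> single_peaked (Q j)) -> single_peaked Ri ->
  SPprofile (upd Q i Ri).
Proof. by move=> Q_sp Ri_sp j; rewrite /upd; case: eqVneq => // /Q_sp. Qed.

Lemma obvious_manipulation_of_dominated (R : realType) n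
    (phi : profile R n -> R -> 'I_n -> R) i Ri Ri' Om (Q : profile R n) :
  (forall j, j != i -> single_peaked (Q j)) ->
  (forall x', option_set phi i Ri' Om x' -> strict Ri x'%:E (phi (upd Q i Ri) Om i)%:E) ->
  obvious_manipulation phi i Ri Ri' Om.
Proof.
move=> Q_sp dominated; split.
  by exists Q; split=> //; apply: dominated; exists Q.
by move=> x' /dominated x'_worse; exists (phi (upd Q i Ri) Om i) => //; exists Q.
Qed.

Lemma sum_le_mulrn_max (R : numDomainType) n (F : 'I_n -> R) i :
  (forall j, F j <= F i) -> \sum_j F j <= F i *+ n.
Proof. by move=> le_Fi; rewrite -[n in _ *+ n]card_ord -sumr_const; exact: ler_sum. Qed.

Lemma sum_ge_mulrn_min (R : numDomainType) n (F : 'I_n -> R) i :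
  (forall j, F i <= F j) -> F i *+ n <= \sum_j F j.
Proof. by move=> ge_Fi; rewrite -[n in _ *+ n]card_ord -sumr_const; exact: ler_sum. Qed.

Section PeakResponsiveRule.
Variables (R : realType) (n : nat) (phi : profile R n -> R -> 'I_n -> R).
Hypotheses (phi_rule : is_rule phi) (phi_resp : peak_responsive phi).
Variables (Om : R) (i : 'I_n).
Hypothesis Om_gt0 : 0 < Om.

Let n_gt0 : (0 < n)%N := leq_ltn_trans (leq0n i) (ltn_ord i).

Lemma mean_share_le_endowment : Om / n%:R <= Om.
Proof.
rewrite ler_pdivrMr ?ltr0n //; apply: ler_peMr; [exact: ltW | by rewrite ler1n].
Qed.

Lemma share_le_endowment Q : SPprofile Q -> phi Q Om i <= Om.
Proof.
move=> Q_sp; have [share_ge0 sum_shares] := phi_rule Q_sp Om_gt0.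
by rewrite -[leRHS]sum_shares (bigD1 i) //= lerDl sumr_ge0.
Qed.

Lemma share_ge_mean_of_top_peak Q :
  SPprofile Q -> peak (Q i) = [set +oo%E] -> Om / n%:R <= phi Q Om i.
Proof.
move=> Q_sp peak_i; have [_ sum_shares] := phi_rule Q_sp Om_gt0.
rewrite ler_pdivrMr ?ltr0n // -[leLHS]sum_shares mulr_natr.
apply: sum_le_mulrn_max => j.
have [-> //|ji] := eqVneq j i.
by apply: phi_resp => // a b _; rewrite peak_i => ->; exact: leey.
Qed.

Lemma share_le_mean_of_zero_peak Q :
  SPprofile Q -> peak (Q i) = [set 0%E] -> phi Q Om i <= Om / n%:R.
Proof.
move=> Q_sp peak_i; have [_ sum_shares] := phi_rule Q_sp Om_gt0.
rewrite ler_pdivlMr ?ltr0n // -[leRHS]sum_shares mulr_natr.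
apply: sum_ge_mulrn_min => j.
have [-> //|ij] := eqVneq j i.
apply: phi_resp => //; first by rewrite eq_sym.
by move=> a b; rewrite peak_i => -> [].
Qed.

Lemma option_set_top_peak Ri x : single_peaked Ri -> peak Ri = [set +oo%E] ->
  option_set phi i Ri Om x -> Om / n%:R <= x <= Om.
Proof.
move=> Ri_sp peak_Ri [Q [Q_sp ->]]; have QRi_sp := upd_SPprofile Q_sp Ri_sp.
by rewrite share_le_endowment // andbT share_ge_mean_of_top_peak // /upd eqxx.
Qed.

Lemma option_set_zero_peak Ri x : single_peaked Ri -> peak Ri = [set 0%E] ->
  option_set phi i Ri Om x -> 0 <= x <= Om / n%:R.
Proof.
move=> Ri_sp peak_Ri [Q [Q_sp ->]]; have QRi_sp := upd_SPprofile Q_sp Ri_sp.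
have [share_ge0 _] := phi_rule QRi_sp Om_gt0.
by rewrite share_ge0 share_le_mean_of_zero_peak // /upd eqxx.
Qed.
End PeakResponsiveRule.

Theorem lemma2 (R : realType) (n : nat) (phi : profile R n -> R -> 'I_n -> R) :
  is_rule phi -> own_peak_only phi -> peak_responsive phi -> NOM phi ->
  equal_division_guarantee phi.
Proof.
move=> phi_rule phi_own_peak phi_resp phi_nom Rp Om i Rp_sp Om_gt0 peak_i.
set p := Om / n%:R; set x0 := phi Rp Om i.
have p_ge0 : 0 <= p by rewrite divr_ge0 ?ler0n ?ltW.
have others_sp j : j != i -> single_peaked (Rp j) by move=> _; exact: Rp_sp.
have truthful T : single_peaked T -> peak T = [set p%:E] -> phi (upd Rp i T) Om i = x0.
  by move=> T_sp T_peak; rewrite /x0 (phi_own_peak Rp Om i T) // T_peak peak_i.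
suff -> : x0 = p.
  by have [[refl _ _ _ _] _] := Rp_sp i; split; apply: refl; rewrite /cdom lee_fin.
have [x0_lt_p|p_lt_x0|//] := ltgtP x0 p; exfalso.
- have x0_lt_p_le_Om : x0 < p <= Om by rewrite x0_lt_p mean_share_le_endowment.
  have [T [T_sp T_peak T_dislikes_x0]] :=
    exists_sp_pref_disliking_below_peak p_ge0 x0_lt_p_le_Om.
  case: (phi_nom i T more_is_better Om T_sp (more_is_better_single_peaked R) Om_gt0).
  apply: (obvious_manipulation_of_dominated others_sp) => x' opt_x'.
  rewrite truthful //; apply: T_dislikes_x0.
  exact: option_set_top_peak (more_is_better_single_peaked R) (more_is_better_peak R) opt_x'.
- have p_ge0_lt_x0 : 0 <= p < x0 by rewrite p_ge0.
  have [T [T_sp T_peak T_dislikes_x0]] :=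
    exists_sp_pref_disliking_above_peak p_ge0_lt_x0.
  have zero_sp := tent_single_peaked ltr01 ltr01 (lexx (0 : R)).
  have zero_peak := tent_peak ltr01 ltr01 (lexx (0 : R)).
  case: (phi_nom i T (tent 1 1 0) Om T_sp zero_sp Om_gt0).
  apply: (obvious_manipulation_of_dominated others_sp) => x' opt_x'.
  rewrite truthful //; apply: T_dislikes_x0.
  exact: option_set_zero_peak zero_sp zero_peak opt_x'.
Qed.
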